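(* Let $c\ge1$ and $\gamma\in(0,1/2]$. There is a constant $C=C(c,\gamma)$ such that the following holds. Let $\theta_1\ge\dots\ge\theta_n$ be $c$-spread, let $K=\gamma n$ be an integer with $K\ge1$, and let $\epsilon$ satisfy $\frac{4c}{\gamma n^2}\le\epsilon\le1$. Then $H^{(t,\epsilon)}\le C\,\frac{n}{\sqrt\epsilon}$ where $t=t(\epsilon,K)$. Moreover, for every $c$-spread instance with $n\ge2$, every $1\le K\le n-1$ and every $\epsilon$ with $\frac cn\le\epsilon\le1$, we have $H^{(0,\epsilon)}=\sum_{i=1}^n\min\{\Delta_i^{-2},\epsilon^{-2}\}\ge\frac{n}{4c\epsilon}$.
   Context: Means $\theta_1\ge\dots\ge\theta_n$ in $[0,1]$ are called $c$-spread (for $c\ge1$) if $|\theta_i-\theta_j|\in\left[\frac{|i-j|}{cn},\frac{c|i-j|}{n}\right]$ for all $i,j\in[n]$. Gaps: $\Delta_i=\theta_i-\theta_{K+1}$ for $i\le K$, $\Delta_i=\theta_K-\theta_i$ for $i\ge K+1$. $t(\epsilon,K)$ is the largest $t\in\{0,\dots,K-1\}$ with $\Delta_{K-t}\cdot t\le K\epsilon$ and $\Delta_{K+t+1}\cdot t\le K\epsilon$. $\Psi_t=\min(\Delta_{K-t},\Delta_{K+t+1})$, $\Psi_t^{\epsilon}=\max(\epsilon,\Psi_t)$, and $H^{(t,\epsilon)}=\sum_{i=1}^n\min\{\Delta_i^{-2},(\Psi_t^\epsilon)^{-2}\}$. *)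

(* classical reals. Means are indexed 1..n via theta : nat -> R. *)
From Stdlib Require Import Reals Lra Lia.
Open Scope R_scope.
Local Open Scope bool_scope.

Definition spread (c : R) (n : nat) (theta : nat -> R) : Prop :=
  (forall i j, (1 <= i)%nat -> (i <= j)%nat -> (j <= n)%nat -> theta j <= theta i) /\
  (forall i, (1 <= i)%nat -> (i <= n)%nat -> 0 <= theta i <= 1) /\
  (forall i j, (1 <= i)%nat -> (i <= n)%nat -> (1 <= j)%nat -> (j <= n)%nat ->
     INR (Nat.max i j - Nat.min i j) / (c * INR n) <= Rabs (theta i - theta j) /\
     Rabs (theta i - theta j) <= c * INR (Nat.max i j - Nat.min i j) / INR n).

Definition Gap (theta : nat -> R) (K i : nat) : R :=
  if Nat.leb i K then theta i - theta (S K) else theta K - theta i.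

Fixpoint sumR (f : nat -> R) (n : nat) : R :=
  match n with O => 0 | S m => sumR f m + f (S m) end.

(* largest m' < m with P m', or 0 if none *)
Fixpoint tsearch (P : nat -> bool) (m : nat) : nat :=
  match m with O => O | S m' => if P m' then m' else tsearch P m' end.

Definition Rleb (x y : R) : bool := if Rle_dec x y then true else false.

Definition t_of (theta : nat -> R) (eps : R) (K : nat) : nat :=
  tsearch (fun t => Rleb (Gap theta K (K - t) * INR t) (INR K * eps) &&
                    Rleb (Gap theta K (K + t + 1) * INR t) (INR K * eps)) K.

Definition Psi (theta : nat -> R) (K t : nat) : R :=
  Rmin (Gap theta K (K - t)) (Gap theta K (K + t + 1)).

Definition Psi_eps (theta : nat -> R) (K t : nat) (eps : R) : R :=
  Rmax eps (Psi theta K t).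

Definition H (theta : nat -> R) (n K t : nat) (eps : R) : R :=
  sumR (fun i => Rmin (/ (Gap theta K i ^ 2)) (/ (Psi_eps theta K t eps ^ 2))) n.

(* Every gap at distance d from the boundary between K and K+1 lies between d/(cn) and
   cd/n.  Upper bound: the maximality of t = t(eps,K) forces a gap at distance t+2 to
   exceed K eps/(t+1), whence K^2 eps <= 4c(t+1)^2; since Psi_t >= (t+1)/(cn), each side
   of the sum is at most sum_d min((cn/d)^2, (cn/(t+1))^2) <= 2(cn)^2/(t+1), which is
   O(n/sqrt eps).  Lower bound: Psi_0 <= c/n <= eps, and the about eps n/c indices at
   distance at most eps n/c from the boundary each contribute eps^-2. *)
From Stdlib Require Import Reals Lra Lia Bool.
Open Scope R_scope.

Lemma sumR_ext f g n : (forall i, (1 <= i <= n)%nat -> f i = g i) -> sumR f n = sumR g n.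
Proof.
  induction n as [|n IH]; intros Hfg; simpl; [reflexivity|].
  rewrite IH by (intros; apply Hfg; lia). rewrite Hfg by lia. reflexivity.
Qed.

Lemma sumR_le f g n : (forall i, (1 <= i <= n)%nat -> f i <= g i) -> sumR f n <= sumR g n.
Proof.
  induction n as [|n IH]; intros Hfg; simpl; [lra|].
  assert (sumR f n <= sumR g n) by (apply IH; intros; apply Hfg; lia).
  assert (f (S n) <= g (S n)) by (apply Hfg; lia). lra.
Qed.

Lemma sumR_le_const f M n : (forall i, (1 <= i <= n)%nat -> f i <= M) -> sumR f n <= INR n * M.
Proof.
  induction n as [|n IH]; intros Hf; simpl sumR; [simpl; lra|].
  rewrite S_INR. assert (sumR f n <= INR n * M) by (apply IH; intros; apply Hf; lia).
  assert (f (S n) <= M) by (apply Hf; lia). lra.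
Qed.

Lemma sumR_succ_l f m : sumR f (S m) = f 1%nat + sumR (fun d => f (S d)) m.
Proof. induction m as [|m IH]; [simpl; lra|]. change (sumR f (S (S m))) with (sumR f (S m) + f (S (S m))). rewrite IH. simpl. lra. Qed.

Lemma sumR_rev m : forall f, sumR (fun d => f (m + 1 - d)%nat) m = sumR f m.
Proof.
  induction m as [|m IH]; intros f; [reflexivity|].
  change (sumR (fun d => f (S m + 1 - d)%nat) (S m)) with
    (sumR (fun d => f (S m + 1 - d)%nat) m + f (S m + 1 - S m)%nat).
  rewrite sumR_succ_l, <- (IH (fun d => f (S d))).
  replace (S m + 1 - S m)%nat with 1%nat by lia.
  rewrite (sumR_ext _ (fun d => f (S (m + 1 - d)))) by (intros; f_equal; lia). lra.
Qed.

Lemma sumR_add f K j : sumR f (K + j) = sumR f K + sumR (fun d => f (K + d)%nat) j.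
Proof.
  induction j as [|j IH]; [rewrite Nat.add_0_r; simpl; lra|].
  rewrite Nat.add_succ_r. simpl. rewrite IH, Nat.add_succ_r. lra.
Qed.

(* Re-index the sum by the distance d to the boundary between K and K+1. *)
Lemma sumR_around f K n : (K <= n)%nat ->
  sumR f n = sumR (fun d => f (K + 1 - d)%nat) K + sumR (fun d => f (K + d)%nat) (n - K).
Proof. intros. rewrite sumR_rev, <- sumR_add. f_equal. lia. Qed.

Lemma tsearch_lt P m : (0 < m)%nat -> (tsearch P m < m)%nat.
Proof.
  induction m as [|m IH]; intros Hm; [lia|]. simpl. destruct (P m); [lia|].
  destruct m; [simpl; lia|]. specialize (IH ltac:(lia)). lia.
Qed.

Lemma tsearch_max P m j : (tsearch P m < j < m)%nat -> P j = false.
Proof.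
  induction m as [|m IH]; intros Hj; [lia|]. simpl in Hj. destruct (P m) eqn:E; [lia|].
  destruct (Nat.eq_dec j m); [subst; auto | apply IH; lia].
Qed.

Lemma Rleb_false_lt x y : Rleb x y = false -> y < x.
Proof. unfold Rleb. destruct (Rle_dec x y); [discriminate | intros; lra]. Qed.

Lemma Rmin_le_compat a b a' b' : a <= a' -> b <= b' -> Rmin a b <= Rmin a' b'.
Proof. intros. eapply Rle_trans; [apply Rle_min_compat_r | apply Rle_min_compat_l]; eauto. Qed.

Lemma inv_sq_le p g : 0 < p -> p <= g -> / g ^ 2 <= / p ^ 2.
Proof. intros. apply Rinv_le_contravar; [apply pow_lt; lra | apply pow_incr; lra]. Qed.

Section SpreadGaps.

Variables (c : R) (n K : nat) (theta : nat -> R).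
Hypothesis Hspread : spread c n theta.

Lemma spread_Gap_left d : (1 <= d <= K)%nat -> (K + 1 <= n)%nat ->
  INR d / (c * INR n) <= Gap theta K (K + 1 - d) <= c * INR d / INR n.
Proof.
  destruct Hspread as [Hmono [_ Hdist]]. intros Hd HK.
  unfold Gap. replace (Nat.leb (K + 1 - d) K) with true by (symmetry; apply Nat.leb_le; lia).
  destruct (Hdist (K + 1 - d)%nat (K + 1)%nat ltac:(lia) ltac:(lia) ltac:(lia) ltac:(lia)) as [h1 h2].
  replace (Nat.max (K + 1 - d) (K + 1) - Nat.min (K + 1 - d) (K + 1))%nat with d in h1, h2 by lia.
  assert (theta (K + 1)%nat <= theta (K + 1 - d)%nat) by (apply Hmono; lia).
  rewrite Rabs_pos_eq in h1, h2 by lra.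
  replace (S K) with (K + 1)%nat by lia. lra.
Qed.

Lemma spread_Gap_right d : (1 <= d)%nat -> (1 <= K)%nat -> (K + d <= n)%nat ->
  INR d / (c * INR n) <= Gap theta K (K + d) <= c * INR d / INR n.
Proof.
  destruct Hspread as [Hmono [_ Hdist]]. intros Hd HK Hn.
  unfold Gap. replace (Nat.leb (K + d) K) with false by (symmetry; apply Nat.leb_gt; lia).
  destruct (Hdist K (K + d)%nat ltac:(lia) ltac:(lia) ltac:(lia) ltac:(lia)) as [h1 h2].
  replace (Nat.max K (K + d) - Nat.min K (K + d))%nat with d in h1, h2 by lia.
  assert (theta (K + d)%nat <= theta K) by (apply Hmono; lia).
  rewrite Rabs_pos_eq in h1, h2 by lra. lra.
Qed.

Hypothesis HK : (1 <= K < n)%nat.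

Lemma sumR_Gap_le (F : R -> R) (G : nat -> R) :
  (forall d g, (1 <= d)%nat -> INR d / (c * INR n) <= g -> g <= c * INR d / INR n -> F g <= G d) ->
  sumR (fun i => F (Gap theta K i)) n <= sumR G K + sumR G (n - K).
Proof.
  intros HFG. rewrite (sumR_around _ K n) by lia. apply Rplus_le_compat; apply sumR_le.
  - intros d Hd. destruct (spread_Gap_left d ltac:(lia) ltac:(lia)). apply HFG; auto; lia.
  - intros d Hd. destruct (spread_Gap_right d ltac:(lia) ltac:(lia) ltac:(lia)). apply HFG; auto; lia.
Qed.

Lemma sumR_Gap_ge (F : R -> R) (G : nat -> R) :
  (forall d g, (1 <= d)%nat -> INR d / (c * INR n) <= g -> g <= c * INR d / INR n -> G d <= F g) ->
  sumR G K + sumR G (n - K) <= sumR (fun i => F (Gap theta K i)) n.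
Proof.
  intros HFG. rewrite (sumR_around _ K n) by lia. apply Rplus_le_compat; apply sumR_le.
  - intros d Hd. destruct (spread_Gap_left d ltac:(lia) ltac:(lia)). apply HFG; auto; lia.
  - intros d Hd. destruct (spread_Gap_right d ltac:(lia) ltac:(lia) ltac:(lia)). apply HFG; auto; lia.
Qed.

End SpreadGaps.

Lemma sumR_inv_sq_tail a k j : 0 <= a -> (1 <= k)%nat ->
  sumR (fun d => a / INR (k + d) ^ 2) j <= a * (/ INR k - / INR (k + j)).
Proof.
  intros Ha Hk. induction j as [|j IH]; [rewrite Nat.add_0_r; simpl; lra|].
  cbn [sumR]. rewrite Nat.add_succ_r, S_INR.
  assert (Hx : 1 <= INR (k + j)) by (apply (le_INR 1); lia).
  set (x := INR (k + j)) in *.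
  (* telescoping: 1/(x+1)^2 <= 1/x - 1/(x+1) *)
  assert (a / (x + 1) ^ 2 <= a * (/ x - / (x + 1))).
  { replace (a * (/ x - / (x + 1))) with (a / (x * (x + 1))) by (field; lra).
    apply Rmult_le_compat_l; [lra|]. apply Rinv_le_contravar; nra. }
  lra.
Qed.

Lemma sumR_min_inv_sq_le a k m : 0 <= a -> (1 <= k)%nat ->
  sumR (fun d => Rmin (a / INR d ^ 2) (a / INR k ^ 2)) m <= 2 * a / INR k.
Proof.
  intros Ha Hk. assert (Hk1 : 1 <= INR k) by (apply (le_INR 1); lia).
  assert (Hhead : INR k * (a / INR k ^ 2) = a / INR k) by (field; lra).
  assert (0 <= a / INR k) by (apply Rmult_le_pos; [lra | left; apply Rinv_0_lt_compat; lra]).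
  assert (Hterm : forall d, Rmin (a / INR d ^ 2) (a / INR k ^ 2) <= a / INR k ^ 2) by (intros; apply Rmin_r).
  destruct (Nat.le_gt_cases m k) as [Hmk|Hkm].
  - eapply Rle_trans; [apply sumR_le_const with (M := a / INR k ^ 2); auto|].
    assert (INR m <= INR k) by (apply le_INR; auto).
    assert (0 <= a / INR k ^ 2) by (apply Rmult_le_pos; [lra | left; apply Rinv_0_lt_compat, pow_lt; lra]).
    nra.
  - replace m with (k + (m - k))%nat by lia. rewrite sumR_add.
    assert (sumR (fun d => Rmin (a / INR d ^ 2) (a / INR k ^ 2)) k <= a / INR k)
      by (rewrite <- Hhead; apply sumR_le_const; auto).
    assert (sumR (fun d => Rmin (a / INR (k + d) ^ 2) (a / INR k ^ 2)) (m - k) <= a / INR k).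
    { eapply Rle_trans; [apply sumR_le with (g := fun d => a / INR (k + d) ^ 2); intros; apply Rmin_l|].
      eapply Rle_trans; [apply sumR_inv_sq_tail; auto|].
      assert (0 < INR (k + (m - k))) by (apply lt_0_INR; lia).
      assert (0 <= a * / INR (k + (m - k))) by (apply Rmult_le_pos; [lra | left; apply Rinv_0_lt_compat; lra]).
      unfold Rdiv. lra. }
    lra.
Qed.

(* The terms with z d <= e all equal e^-2, and there are at least min(m, e/(2z)) of them. *)
Lemma sumR_min_inv_sq_ge z e m : 0 < z -> z <= e ->
  Rmin (INR m) (e / (2 * z)) * / e ^ 2 <= sumR (fun d => Rmin (/ (z * INR d) ^ 2) (/ e ^ 2)) m.
Proof.
  intros Hz Hze.
  assert (Hie : 0 < / e ^ 2) by (apply Rinv_0_lt_compat, pow_lt; lra).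
  set (L := e / (2 * z)). assert (HL : 2 * z * L = e) by (unfold L; field; lra).
  induction m as [|m IH].
  - cbn [sumR INR]. assert (Rmin 0 L <= 0) by apply Rmin_l. nra.
  - cbn [sumR]. rewrite S_INR. assert (Hm0 := pos_INR m).
    destruct (Rle_dec L (INR m)) as [h|h].
    + rewrite Rmin_right in IH by lra. rewrite Rmin_right by lra.
      assert (0 <= Rmin (/ (z * (INR m + 1)) ^ 2) (/ e ^ 2)).
      { apply Rmin_glb; [left; apply Rinv_0_lt_compat, pow_lt; nra | lra]. }
      lra.
    + rewrite Rmin_left in IH by lra.
      assert (hz : z * (INR m + 1) <= e).
      { destruct (Nat.eq_dec m 0) as [->|]; [simpl; lra|].
        assert (1 <= INR m) by (apply (le_INR 1); lia). nra. }
      rewrite (Rmin_right (/ (z * (INR m + 1)) ^ 2)) by (apply inv_sq_le; nra).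
      assert (Rmin (INR m + 1) L <= INR m + 1) by apply Rmin_l.
      nra.
Qed.

Lemma t_of_lt theta eps K : (1 <= K)%nat -> (t_of theta eps K < K)%nat.
Proof. intros. apply tsearch_lt. lia. Qed.

Lemma t_of_succ_fails theta eps K : (S (t_of theta eps K) < K)%nat ->
  let t := S (t_of theta eps K) in
  INR K * eps < Gap theta K (K - t) * INR t \/ INR K * eps < Gap theta K (K + t + 1) * INR t.
Proof.
  intros Ht t. unfold t_of in Ht, t.
  match type of Ht with (S (tsearch ?P _) < _)%nat =>
    assert (Hf := tsearch_max P K (S (tsearch P K)) ltac:(lia)) end.
  apply andb_false_iff in Hf. destruct Hf as [Hf|Hf]; apply Rleb_false_lt in Hf; auto.
Qed.

Lemma Psi_ge c n theta K t : spread c n theta -> (1 <= K)%nat -> (t < K)%nat ->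
  (K + t + 1 <= n)%nat -> INR (S t) / (c * INR n) <= Psi theta K t.
Proof.
  intros Hsp HK Ht Hn. unfold Psi.
  replace (K - t)%nat with (K + 1 - S t)%nat by lia. replace (K + t + 1)%nat with (K + S t)%nat by lia.
  destruct (spread_Gap_left c n K theta Hsp (S t) ltac:(lia) ltac:(lia)).
  destruct (spread_Gap_right c n K theta Hsp (S t) ltac:(lia) ltac:(lia) ltac:(lia)).
  apply Rmin_glb; lra.
Qed.

(* If t+1 < K, the gap at distance t+2 violates the defining condition of t and is at most c(t+2)/n. *)
Lemma t_of_sq_ge c n theta K eps : spread c n theta -> 1 <= c -> (1 <= K)%nat -> (2 * K <= n)%nat ->
  0 <= eps <= 1 -> INR K ^ 2 * eps <= 4 * c * (INR (t_of theta eps K) + 1) ^ 2.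
Proof.
  intros Hsp Hc HK Hn Heps.
  assert (Ht := t_of_lt theta eps K HK).
  set (t := t_of theta eps K) in *.
  assert (HT : INR t + 1 = INR (S t)) by (rewrite S_INR; reflexivity).
  assert (HT1 : 1 <= INR t + 1) by (assert (Ht0 := pos_INR t); lra).
  assert (HN : 0 < INR n) by (apply lt_0_INR; lia).
  destruct (Nat.eq_dec (S t) K) as [HtK|HtK].
  - rewrite HT, HtK. nra.
  - assert (Hfar : Gap theta K (K - S t) <= c * (INR t + 2) / INR n /\
                   Gap theta K (K + S t + 1) <= c * (INR t + 2) / INR n).
    { replace (INR t + 2) with (INR (S (S t))) by (rewrite !S_INR; ring).
      replace (K - S t)%nat with (K + 1 - S (S t))%nat by lia.
      replace (K + S t + 1)%nat with (K + S (S t))%nat by lia.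
      destruct (spread_Gap_left c n K theta Hsp (S (S t)) ltac:(lia) ltac:(lia)).
      destruct (spread_Gap_right c n K theta Hsp (S (S t)) ltac:(lia) ltac:(lia) ltac:(lia)).
      lra. }
    assert (Hfail : INR K * eps < c * (INR t + 2) / INR n * (INR t + 1)).
    { rewrite HT. destruct (t_of_succ_fails theta eps K ltac:(unfold t in *; lia)) as [Hf|Hf];
        fold t in Hf; (eapply Rlt_le_trans; [exact Hf | apply Rmult_le_compat_r; [apply pos_INR | lra]]). }
    assert (Hprod : INR K * INR n * eps < c * (INR t + 2) * (INR t + 1)).
    { replace (c * (INR t + 2) * (INR t + 1)) with (c * (INR t + 2) / INR n * (INR t + 1) * INR n)
        by (field; lra). nra. }
    assert (INR K <= INR n) by (apply le_INR; lia).
    assert (INR K ^ 2 * eps <= INR K * INR n * eps) 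
      by (apply Rmult_le_compat_r; [lra|]; assert (Hk0 := pos_INR K); nra).
    assert (c * (INR t + 2) * (INR t + 1) <= 4 * c * (INR t + 1) ^ 2) by nra.
    lra.
Qed.

Lemma H_le c n theta K t eps : spread c n theta -> 0 < c -> (1 <= K)%nat -> (t < K)%nat ->
  (K + t + 1 <= n)%nat -> H theta n K t eps <= 4 * (c * INR n) ^ 2 / (INR t + 1).
Proof.
  intros Hsp Hc HK Ht Hn.
  set (a := (c * INR n) ^ 2).
  assert (HN : 0 < INR n) by (apply lt_0_INR; lia).
  assert (Hx : 0 < c * INR n) by nra.
  assert (HT : INR t + 1 = INR (S t)) by (rewrite S_INR; reflexivity).
  assert (Hinv : forall d, 0 < INR d -> / (INR d / (c * INR n)) ^ 2 = a / INR d ^ 2)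
    by (intros; unfold a; field; lra).
  assert (HPsi : / Psi_eps theta K t eps ^ 2 <= a / INR (S t) ^ 2).
  { rewrite <- Hinv by (apply lt_0_INR; lia).
    assert (0 < INR (S t) / (c * INR n)) by (apply Rdiv_lt_0_compat; [apply lt_0_INR|]; lia || lra).
    apply inv_sq_le; auto.
    eapply Rle_trans; [apply (Psi_ge c n theta K t); auto | unfold Psi_eps; apply Rmax_r]. }
  unfold H. eapply Rle_trans.
  - apply (sumR_Gap_le c n K theta Hsp ltac:(lia)
             (fun g => Rmin (/ g ^ 2) (/ Psi_eps theta K t eps ^ 2))
             (fun d => Rmin (a / INR d ^ 2) (a / INR (S t) ^ 2))).
    intros d g Hd Hg _. apply Rmin_le_compat; [|exact HPsi].
    assert (0 < INR d) by (apply lt_0_INR; lia).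
    rewrite <- Hinv by lra. apply inv_sq_le; [apply Rdiv_lt_0_compat|]; lra.
  - assert (0 <= a) by (unfold a; nra).
    rewrite HT. assert (Hs := sumR_min_inv_sq_le a (S t)).
    assert (sumR (fun d => Rmin (a / INR d ^ 2) (a / INR (S t) ^ 2)) K <= 2 * a / INR (S t)) by (apply Hs; lia || lra).
    assert (sumR (fun d => Rmin (a / INR d ^ 2) (a / INR (S t) ^ 2)) (n - K) <= 2 * a / INR (S t)) by (apply Hs; lia || lra).
    unfold Rdiv in *. lra.
Qed.

Lemma Psi_eps_zero c n theta K eps : spread c n theta -> (1 <= K < n)%nat -> c / INR n <= eps ->
  Psi_eps theta K 0 eps = eps.
Proof.
  intros Hsp HK Heps. unfold Psi_eps, Psi. apply Rmax_left.
  replace (K - 0)%nat with (K + 1 - 1)%nat by lia.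
  destruct (spread_Gap_left c n K theta Hsp 1 ltac:(lia) ltac:(lia)) as [_ Hgap].
  replace (c * INR 1 / INR n) with (c / INR n) in Hgap by (simpl; field; apply not_0_INR; lia).
  eapply Rle_trans; [apply Rmin_l | lra].
Qed.

Lemma sumR_min_inv_Gap_sq_ge c n theta K eps : spread c n theta -> 1 <= c -> (1 <= K < n)%nat ->
  c / INR n <= eps <= 1 ->
  INR n / (4 * c * eps) <= sumR (fun i => Rmin (/ Gap theta K i ^ 2) (/ eps ^ 2)) n.
Proof.
  intros Hsp Hc HK [Heps Heps1].
  assert (HN : 0 < INR n) by (apply lt_0_INR; lia).
  set (z := c / INR n) in *. assert (Hz : 0 < z) by (unfold z; apply Rdiv_lt_0_compat; lra).
  assert (He : 0 < eps) by lra.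
  eapply Rle_trans; [|apply (sumR_Gap_ge c n K theta Hsp ltac:(lia)
                              (fun g => Rmin (/ g ^ 2) (/ eps ^ 2))
                              (fun d => Rmin (/ (z * INR d) ^ 2) (/ eps ^ 2)))].
  2: { intros d g Hd Hg1 Hg2. apply Rle_min_compat_r.
       assert (0 < INR d / (c * INR n)) by (apply Rdiv_lt_0_compat; [apply lt_0_INR; lia | nra]).
       apply inv_sq_le; [lra|]. unfold z. replace (c / INR n * INR d) with (c * INR d / INR n) by (field; lra).
       exact Hg2. }
  assert (HL := sumR_min_inv_sq_ge z eps K Hz ltac:(lra)).
  assert (HR := sumR_min_inv_sq_ge z eps (n - K) Hz ltac:(lra)).
  set (L := eps / (2 * z)) in *.
  assert (HLn : L <= INR n).
  { unfold L, z. replace (eps / (2 * (c / INR n))) with (eps * INR n / (2 * c)) by (field; lra).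
    apply Rmult_le_reg_r with (2 * c); [lra|].
    replace (eps * INR n / (2 * c) * (2 * c)) with (eps * INR n) by (field; lra). nra. }
  assert (HKn : INR K <= INR n) by (apply le_INR; lia).
  rewrite minus_INR in HR by lia.
  (* as L <= n, either both sides are shorter than L and together have n indices, or one has L *)
  assert (Hboth : L <= Rmin (INR K) L + Rmin (INR n - INR K) L).
  { assert (Hk0 := pos_INR K). assert (0 < L) by (unfold L; apply Rdiv_lt_0_compat; lra). unfold Rmin.
    destruct (Rle_dec (INR K) L); destruct (Rle_dec (INR n - INR K) L); lra. }
  assert (Hie : 0 < / eps ^ 2) by (apply Rinv_0_lt_compat, pow_lt; lra).
  assert (HLe : L * / eps ^ 2 = INR n / (2 * c * eps)) by (unfold L, z; field; lra).
  assert (INR n / (4 * c * eps) <= INR n / (2 * c * eps)).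
  { apply Rmult_le_compat_l; [lra|]. apply Rinv_le_contravar; nra. }
  nra.
Qed.

Lemma H_t_of_le c n theta K eps : spread c n theta -> 1 <= c -> (1 <= K)%nat -> (2 * K <= n)%nat ->
  0 < eps <= 1 ->
  H theta n K (t_of theta eps K) eps <= 8 * c ^ 2 * sqrt c * INR n ^ 2 / (INR K * sqrt eps).
Proof.
  intros Hsp Hc HK Hn Heps.
  assert (Ht := t_of_lt theta eps K HK).
  assert (Hsq := t_of_sq_ge c n theta K eps Hsp Hc HK Hn ltac:(lra)).
  assert (HH := H_le c n theta K (t_of theta eps K) eps Hsp ltac:(lra) HK Ht ltac:(lia)).
  set (T := INR (t_of theta eps K) + 1) in *.
  assert (HT : 1 <= T) by (unfold T; assert (Ht0 := pos_INR (t_of theta eps K)); lra).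
  assert (HK1 : 1 <= INR K) by (apply (le_INR 1); lia).
  assert (HN : 0 < INR n) by (apply lt_0_INR; lia).
  assert (Hs : 0 < sqrt eps) by (apply sqrt_lt_R0; lra).
  assert (Hsc : 1 <= sqrt c) by (rewrite <- sqrt_1; apply sqrt_le_1_alt; lra).
  assert (HKs : INR K * sqrt eps <= 2 * sqrt c * T).
  { assert (Hsq' : (INR K * sqrt eps) ^ 2 <= (2 * sqrt c * T) ^ 2).
    { replace ((INR K * sqrt eps) ^ 2) with (INR K ^ 2 * eps)
        by (rewrite Rpow_mult_distr, pow2_sqrt; lra).
      replace ((2 * sqrt c * T) ^ 2) with (4 * c * T ^ 2)
        by (rewrite !Rpow_mult_distr, pow2_sqrt; lra).
      exact Hsq. }
    apply Rsqr_incr_0_var; [unfold Rsqr; lra | nra]. }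
  eapply Rle_trans; [exact HH|].
  assert (Hdiff : 8 * c ^ 2 * sqrt c * INR n ^ 2 / (INR K * sqrt eps) - 4 * (c * INR n) ^ 2 / T
                  = 4 * c ^ 2 * INR n ^ 2 * (2 * sqrt c * T - INR K * sqrt eps) / (INR K * sqrt eps * T))
    by (field; lra).
  assert (0 <= 4 * c ^ 2 * INR n ^ 2 * (2 * sqrt c * T - INR K * sqrt eps) / (INR K * sqrt eps * T)).
  { apply Rmult_le_pos; [|left; apply Rinv_0_lt_compat; apply Rmult_lt_0_compat; nra].
    apply Rmult_le_pos; [|lra]. nra. }
  lra.
Qed.

Theorem lemma1 :
  (forall c gamma : R, 1 <= c -> 0 < gamma -> gamma <= 1 / 2 ->
     exists C : R,
       forall (n : nat) (theta : nat -> R) (K : nat) (eps : R),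
         spread c n theta ->
         INR K = gamma * INR n -> (1 <= K)%nat ->
         4 * c / (gamma * INR n ^ 2) <= eps -> eps <= 1 ->
         H theta n K (t_of theta eps K) eps <= C * INR n / sqrt eps) /\
  (forall (c : R) (n : nat) (theta : nat -> R) (K : nat) (eps : R),
     1 <= c -> spread c n theta -> (2 <= n)%nat ->
     (1 <= K)%nat -> (K <= n - 1)%nat ->
     c / INR n <= eps -> eps <= 1 ->
     H theta n K 0 eps = sumR (fun i => Rmin (/ (Gap theta K i ^ 2)) (/ (eps ^ 2))) n /\
     INR n / (4 * c * eps) <= H theta n K 0 eps).
Proof.
  split.
  - intros c gamma Hc Hg Hg2. exists (8 * c ^ 2 * sqrt c / gamma).
    intros n theta K eps Hsp HKg HK Heps Heps1.
    assert (HK1 : 1 <= INR K) by (apply (le_INR 1); lia).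
    assert (HN : 0 < INR n) by nra.
    assert (H2K : (2 * K <= n)%nat) by (apply INR_le; rewrite mult_INR, HKg; simpl; nra).
    assert (Heps0 : 0 < eps).
    { eapply Rlt_le_trans; [|exact Heps]. apply Rdiv_lt_0_compat; [lra|]. apply Rmult_lt_0_compat; [lra | apply pow_lt; lra]. }
    assert (Hs : 0 < sqrt eps) by (apply sqrt_lt_R0; lra).
    eapply Rle_trans; [apply (H_t_of_le c n); auto; lra|].
    right. rewrite HKg. field. repeat split; lra.
  - intros c n theta K eps Hc Hsp Hn HK HKn Heps Heps1.
    assert (HeqH : H theta n K 0 eps = sumR (fun i => Rmin (/ (Gap theta K i ^ 2)) (/ (eps ^ 2))) n)
      by (unfold H; rewrite (Psi_eps_zero c n); auto; lia).
    split; [exact HeqH|]. rewrite HeqH.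
    apply (sumR_min_inv_Gap_sq_ge c); auto; lia.
Qed.
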